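(* Let $X\in\mathbb{R}^n$ be arbitrary, $k\in[n]$, and let $\widehat\theta^{(k)}$ be any minimizer of $\|X-\theta\|^2$ over $\Theta_k^\uparrow$; let $\widehat\theta^{(n)}$ be the minimizer over $\Theta_n^\uparrow$. Let $0=\widehat a_0<\widehat a_1<\cdots<\widehat a_m=n$ be such that $(\widehat a_{j-1}:\widehat a_j]$, $j\in[m]$, are the maximal blocks of consecutive indices on which $\widehat\theta^{(k)}$ is constant, and let $\widehat A_k=\{\widehat a_1,\dots,\widehat a_m\}$ (similarly $\widehat A_n$ for $\widehat\theta^{(n)}$). Then: 1. For each $j\in[m]$, $\widehat{\theta}_i^{(k)}=\overline{X}_{(\widehat{a}_{j-1}:\widehat{a}_j]}$ for all $i\in(\widehat{a}_{j-1}:\widehat{a}_j]$. 2. For each $j\in[m-1]$ and all integers $0\leq s<\widehat{a}_j<t\leq n$, $$\overline{X}_{(s:\widehat{a}_j]}<\frac{\widehat{\theta}_{\widehat{a}_j}^{(k)}+\widehat{\theta}^{(k)}_{\widehat{a}_{j+1}}}{2}<\overline{X}_{(\widehat{a}_j:t]};$$ consequently $\widehat{\theta}_{\widehat{a}_j}^{(n)}<\frac{\widehat{\theta}^{(k)}_{\widehat{a}_j}+\widehat{\theta}^{(k)}_{\widehat{a}_{j+1}}}{2}<\widehat{\theta}_{\widehat{a}_j+1}^{(n)}$. 3. $\widehat{A}_k\subset\widehat{A}_n$.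
   Context: $[n]=\{1,\dots,n\}$. For reals $a\le b$, $(a:b]$ is the set of integers $i$ with $a<i\le b$; for nonempty $J$, $\overline X_J=|J|^{-1}\sum_{i\in J}X_i$. For $k\in[n]$, $\Theta_k^{\uparrow}$ is the set of $\theta\in\mathbb{R}^n$ for which there exist integers $0=a_0\le\cdots\le a_k=n$ and reals $\mu_1\le\cdots\le\mu_k$ with $\theta_i=\mu_j$ for all $i\in(a_{j-1}:a_j]$; $\Theta_n^\uparrow$ is the set of all nondecreasing vectors. *)

(* real vectors in R^n are represented as functions nat -> R,
   of which only the coordinates 1..n are meaningful. *)
From Stdlib Require Import Reals Lra Lia List.
Open Scope R_scope.

Definition sum_oc (f : nat -> R) (a b : nat) : R :=
  fold_right Rplus 0 (map f (seq (S a) (b - a))).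

(* mean of X over (a:b] (used only with a < b, so the block is nonempty) *)
Definition mean_oc (X : nat -> R) (a b : nat) : R :=
  sum_oc X a b / INR (b - a).

Definition sqdist (n : nat) (X theta : nat -> R) : R :=
  sum_oc (fun i => (X i - theta i) ^ 2) 0 n.

Definition InThetaUp (n k : nat) (theta : nat -> R) : Prop :=
  exists (a : nat -> nat) (mu : nat -> R),
    a 0%nat = 0%nat /\ a k = n /\
    (forall j, (j < k)%nat -> (a j <= a (S j))%nat) /\
    (forall j, (1 <= j < k)%nat -> mu j <= mu (S j)) /\
    (forall j i, (1 <= j <= k)%nat -> (a (j - 1) < i <= a j)%nat -> theta i = mu j).

Definition Nondecr (n : nat) (theta : nat -> R) : Prop :=
  forall i j, (1 <= i <= j)%nat -> (j <= n)%nat -> theta i <= theta j.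

Definition MaxBlocks (n : nat) (theta : nat -> R) (m : nat) (a : nat -> nat) : Prop :=
  a 0%nat = 0%nat /\ a m = n /\
  (forall j, (j < m)%nat -> (a j < a (S j))%nat) /\
  (forall j i i', (1 <= j <= m)%nat -> (a (j - 1) < i <= a j)%nat ->
        (a (j - 1) < i' <= a j)%nat -> theta i = theta i') /\
  (forall j, (1 <= j < m)%nat -> theta (a j) <> theta (S (a j))).

From Stdlib Require Import Reals Lra Lia List Arith.
Open Scope R_scope.

(* A nondecreasing vector lies in Theta_k exactly when its jumps are among k + 1
   nondecreasing cut points from 0 to n, so membership of a perturbed vector is checked on
   its jumps.  The k-piece fit cannot be improved by shifting one of its blocks, which makes
   each block value the block mean.  Nor can it be improved by giving the part (s:a_j] of
   block j together with block j+1, or block j together with the part (a_j:t] of block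
   j+1, a common level slightly inside the two old levels; this gives the midpoint
   inequalities for a_(j-1) <= s and t <= a_(j+1), and the block means propagate them to
   all s and t.  The isotonic fit cannot be improved by lowering the part of its block
   ending at a_j or raising the part starting after a_j, so its values at a_j and a_j + 1
   are bounded by means of X ending at a_j and starting after a_j; the midpoint separates
   them, and a_j is a jump of the isotonic fit. *)

Lemma sum_oc_empty f a b : (b <= a)%nat -> sum_oc f a b = 0.
Proof. intros. unfold sum_oc. replace (b - a)%nat with 0%nat by lia. reflexivity. Qed.

Lemma sum_oc_S f a b : (a <= b)%nat -> sum_oc f a (S b) = sum_oc f a b + f (S b).
Proof.
  intros Hab. unfold sum_oc. replace (S b - a)%nat with (S (b - a)) by lia.
  rewrite seq_S, map_app, fold_right_app. simpl.
  replace (S (a + (b - a))) with (S b) by lia.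
  generalize (map f (seq (S a) (b - a))). induction l as [|x l IH]; simpl; lra.
Qed.

Lemma sum_oc_ext f g a b : (forall i, (a < i <= b)%nat -> f i = g i) ->
  sum_oc f a b = sum_oc g a b.
Proof.
  induction b as [|b IH]; intros Hfg.
  - rewrite !sum_oc_empty by lia. reflexivity.
  - destruct (le_lt_dec a b).
    + rewrite !sum_oc_S, IH, Hfg by (try intros; try apply Hfg; lia). reflexivity.
    + rewrite !sum_oc_empty by lia. reflexivity.
Qed.

Lemma sum_oc_split f a b c : (a <= b <= c)%nat ->
  sum_oc f a c = sum_oc f a b + sum_oc f b c.
Proof.
  induction c as [|c IH]; intros Hb.
  - rewrite !sum_oc_empty by lia. lra.
  - destruct (le_lt_dec b c).
    + rewrite !sum_oc_S, IH by lia. lra.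
    + replace b with (S c) by lia. rewrite (sum_oc_empty f (S c) (S c)) by lia. lra.
Qed.

Lemma sum_oc_affine f al be a b :
  sum_oc (fun i => al * f i + be) a b = al * sum_oc f a b + INR (b - a) * be.
Proof.
  induction b as [|b IH].
  - rewrite !sum_oc_empty by lia. simpl. lra.
  - destruct (le_lt_dec a b).
    + rewrite !sum_oc_S, IH by lia.
      replace (S b - a)%nat with (S (b - a)) by lia. rewrite S_INR. lra.
    + rewrite !sum_oc_empty by lia. replace (S b - a)%nat with 0%nat by lia. simpl. lra.
Qed.

Lemma sum_oc_minus f g a b :
  sum_oc (fun i => f i - g i) a b = sum_oc f a b - sum_oc g a b.
Proof.
  induction b as [|b IH].
  - rewrite !sum_oc_empty by lia. lra.
  - destruct (le_lt_dec a b).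
    + rewrite !sum_oc_S, IH by lia. lra.
    + rewrite !sum_oc_empty by lia. lra.
Qed.

Lemma sum_oc_eq0 f a b : (forall i, (a < i <= b)%nat -> f i = 0) -> sum_oc f a b = 0.
Proof.
  intros Hf. rewrite (sum_oc_ext f (fun i => 0 * f i + 0)), sum_oc_affine.
  - lra.
  - intros i Hi. rewrite Hf by lia. lra.
Qed.

Lemma sum_oc_mean X a b : (a < b)%nat -> sum_oc X a b = INR (b - a) * mean_oc X a b.
Proof.
  intros Hab. assert (0 < INR (b - a)) by (apply lt_0_INR; lia).
  unfold mean_oc. field. lra.
Qed.

Definition replace_oc (th : nat -> R) (p q : nat) (w : R) : nat -> R :=
  fun i => if andb (p <? i)%nat (i <=? q)%nat then w else th i.

Lemma replace_oc_in th p q w i : (p < i <= q)%nat -> replace_oc th p q w i = w.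
Proof.
  intros Hi. unfold replace_oc.
  destruct (Nat.ltb_spec p i), (Nat.leb_spec i q); simpl; auto; lia.
Qed.

Lemma replace_oc_out th p q w i : ~ (p < i <= q)%nat -> replace_oc th p q w i = th i.
Proof.
  intros Hi. unfold replace_oc.
  destruct (Nat.ltb_spec p i), (Nat.leb_spec i q); simpl; auto; lia.
Qed.

Lemma replace_oc_cases th p q w i :
  ((p < i <= q)%nat /\ replace_oc th p q w i = w) \/
  (~ (p < i <= q)%nat /\ replace_oc th p q w i = th i).
Proof.
  destruct (le_lt_dec i p) as [Hi|Hi]; [|destruct (le_lt_dec i q) as [Hi'|Hi']].
  - right. split; [lia|]. apply replace_oc_out. lia.
  - left. split; [lia|]. apply replace_oc_in. lia.
  - right. split; [lia|]. apply replace_oc_out. lia.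
Qed.

Lemma sqdist_replace_oc n X th p q w : (p <= q <= n)%nat ->
  sqdist n X (replace_oc th p q w) - sqdist n X th =
  sum_oc (fun i => (X i - w) ^ 2 - (X i - th i) ^ 2) p q.
Proof.
  intros Hpq. unfold sqdist. rewrite <- sum_oc_minus.
  rewrite (sum_oc_split _ 0 p n), (sum_oc_split _ p q n) by lia.
  rewrite (sum_oc_eq0 _ 0 p), (sum_oc_eq0 _ q n).
  - rewrite Rplus_0_l, Rplus_0_r. apply sum_oc_ext. intros i Hi.
    rewrite replace_oc_in by lia. reflexivity.
  - intros i Hi. rewrite replace_oc_out by lia. ring.
  - intros i Hi. rewrite replace_oc_out by lia. ring.
Qed.

Lemma sum_oc_sqdiff_const X th p q u w : (forall i, (p < i <= q)%nat -> th i = u) ->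
  sum_oc (fun i => (X i - w) ^ 2 - (X i - th i) ^ 2) p q =
  (u - w) * (2 * sum_oc X p q - INR (q - p) * (u + w)).
Proof.
  intros Hu.
  rewrite (sum_oc_ext _ (fun i => (2 * (u - w)) * X i + (- ((u - w) * (u + w))))).
  - rewrite sum_oc_affine. ring.
  - intros i Hi. rewrite Hu by lia. ring.
Qed.

Lemma sqdist_replace_two_blocks n X th p r q u1 u2 w : (p <= r <= q)%nat -> (q <= n)%nat ->
  (forall i, (p < i <= r)%nat -> th i = u1) -> (forall i, (r < i <= q)%nat -> th i = u2) ->
  sqdist n X (replace_oc th p q w) - sqdist n X th =
  (u1 - w) * (2 * sum_oc X p r - INR (r - p) * (u1 + w)) +
  (u2 - w) * (2 * sum_oc X r q - INR (q - r) * (u2 + w)).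
Proof.
  intros Hr Hq Hu1 Hu2.
  rewrite sqdist_replace_oc, (sum_oc_split _ p r q) by lia.
  rewrite (sum_oc_sqdiff_const X th p r u1), (sum_oc_sqdiff_const X th r q u2); auto.
Qed.

Lemma slope_nonneg_of_local_min d L A : 0 < d -> 0 <= L ->
  (forall e, 0 < e <= d -> 0 <= e * (2 * A + L * e)) -> 0 <= A.
Proof.
  intros Hd HL H. destruct (Rle_or_lt 0 A) as [|HA]; auto. exfalso.
  set (e := Rmin d (- A / (L + 1))).
  assert (He0 : 0 < e). { apply Rmin_glb_lt; auto. apply Rdiv_lt_0_compat; lra. }
  assert (He1 : e <= d) by apply Rmin_l.
  assert (He2 : (L + 1) * e <= - A).
  { replace (- A) with ((L + 1) * (- A / (L + 1))) by (field; lra).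
    apply Rmult_le_compat_l; [lra | apply Rmin_r]. }
  specialize (H e (conj He0 He1)). nra.
Qed.

Lemma exists_margin (P : Prop) x v : (P -> x < v) -> exists d, 0 < d /\ (P -> d <= v - x).
Proof.
  intros Hx. exists (if Rlt_dec x v then v - x else 1).
  split; [destruct (Rlt_dec x v); lra|].
  intros HP. specialize (Hx HP). destruct (Rlt_dec x v); lra.
Qed.

Section FirstOrder.
Variables (n : nat) (X th : nat -> R) (p q : nat) (v d : R).
Hypotheses (Hpq : (p <= q <= n)%nat) (Hv : forall i, (p < i <= q)%nat -> th i = v) (Hd : 0 < d).

Lemma sqdist_replace_shift e :
  sqdist n X (replace_oc th p q (v + e)) - sqdist n X th =
  e * (2 * (INR (q - p) * v - sum_oc X p q) + INR (q - p) * e).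
Proof. rewrite sqdist_replace_oc, (sum_oc_sqdiff_const X th p q v) by auto. ring. Qed.

Lemma sum_oc_le_of_raise :
  (forall e, 0 < e <= d -> sqdist n X th <= sqdist n X (replace_oc th p q (v + e))) ->
  sum_oc X p q <= INR (q - p) * v.
Proof.
  intros Hopt. cut (0 <= INR (q - p) * v - sum_oc X p q); [lra|].
  apply (slope_nonneg_of_local_min d (INR (q - p))); auto using pos_INR.
  intros e He. specialize (Hopt e He). pose proof (sqdist_replace_shift e). nra.
Qed.

Lemma sum_oc_ge_of_lower :
  (forall e, 0 < e <= d -> sqdist n X th <= sqdist n X (replace_oc th p q (v - e))) ->
  INR (q - p) * v <= sum_oc X p q.
Proof.
  intros Hopt. cut (0 <= sum_oc X p q - INR (q - p) * v); [lra|].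
  apply (slope_nonneg_of_local_min d (INR (q - p))); auto using pos_INR.
  intros e He. specialize (Hopt e He). pose proof (sqdist_replace_shift (- e)).
  unfold Rminus in Hopt. nra.
Qed.

End FirstOrder.

(* With [w = u2 - e] the upper block costs only [N2 e^2] while the lower one saves
   of order [e]. *)
Lemma merge_gain_lower u1 u2 S1 N1 N2 : 0 < N1 -> 0 < N2 -> u1 < u2 ->
  N1 * (u1 + u2) <= 2 * S1 ->
  exists w, u1 <= w <= u2 /\
    (u1 - w) * (2 * S1 - N1 * (u1 + w)) + (u2 - w) * (2 * (N2 * u2) - N2 * (u2 + w)) < 0.
Proof.
  intros HN1 HN2 Hu HS.
  set (e := N1 * (u2 - u1) / (2 * (N1 + N2))).
  assert (He : 2 * (N1 + N2) * e = N1 * (u2 - u1)) by (unfold e; field; lra).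
  assert (He0 : 0 < e) by (unfold e; apply Rdiv_lt_0_compat; nra).
  assert (He1 : e < u2 - u1) by nra.
  exists (u2 - e). split; [lra|].
  assert (0 <= (u2 - u1 - e) * (2 * S1 - N1 * (u1 + u2))) by (apply Rmult_le_pos; lra).
  assert (0 < e * (N1 * (u2 - u1))) by (apply Rmult_lt_0_compat; nra).
  replace ((u1 - (u2 - e)) * (2 * S1 - N1 * (u1 + (u2 - e))) +
           (u2 - (u2 - e)) * (2 * (N2 * u2) - N2 * (u2 + (u2 - e))))
    with (- ((u2 - u1 - e) * (2 * S1 - N1 * (u1 + u2))) - e * (N1 * (u2 - u1))
          + e * (2 * (N1 + N2) * e) / 2) by field.
  rewrite He. lra.
Qed.

Lemma merge_gain_upper u1 u2 S2 N1 N2 : 0 < N1 -> 0 < N2 -> u1 < u2 ->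
  2 * S2 <= N2 * (u1 + u2) ->
  exists w, u1 <= w <= u2 /\
    (u1 - w) * (2 * (N1 * u1) - N1 * (u1 + w)) + (u2 - w) * (2 * S2 - N2 * (u2 + w)) < 0.
Proof.
  intros HN1 HN2 Hu HS.
  destruct (merge_gain_lower (- u2) (- u1) (- S2) N2 N1) as [w [Hw Hgain]]; try lra.
  exists (- w). split; [lra|]. nra.
Qed.

Lemma le_of_steps (c : nat -> nat) hi : (forall j, (j < hi)%nat -> (c j <= c (S j))%nat) ->
  forall x y, (x <= y <= hi)%nat -> (c x <= c y)%nat.
Proof.
  intros Hc x y. induction y as [|y IH]; intros Hxy.
  - replace x with 0%nat by lia. lia.
  - destruct (Nat.eq_dec x (S y)); [subst; lia|].
    specialize (Hc y ltac:(lia)). specialize (IH ltac:(lia)). lia.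
Qed.

Lemma lt_of_steps (c : nat -> nat) hi : (forall j, (j < hi)%nat -> (c j < c (S j))%nat) ->
  forall x y, (x < y <= hi)%nat -> (c x < c y)%nat.
Proof.
  intros Hc x y. induction y as [|y IH]; intros Hxy; [lia|].
  destruct (Nat.eq_dec x y); [subst; apply Hc; lia|].
  specialize (Hc y ltac:(lia)). specialize (IH ltac:(lia)). lia.
Qed.

Lemma Nondecr_of_steps n th : (forall i, (1 <= i < n)%nat -> th i <= th (S i)) -> Nondecr n th.
Proof.
  intros Hth i j. induction j as [|j IH]; intros Hij Hjn; [lia|].
  destruct (Nat.eq_dec i (S j)); [subst; lra|].
  specialize (Hth j ltac:(lia)). specialize (IH ltac:(lia) ltac:(lia)). lra.
Qed.

Lemma block_of_breaks (c : nat -> nat) : c 0%nat = 0%nat -> forall h i, (1 <= i <= c h)%nat ->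
  exists l, (1 <= l <= h)%nat /\ (c (l - 1) < i <= c l)%nat.
Proof.
  intros H0 h. induction h as [|h IH]; intros i Hi; [rewrite H0 in Hi; lia|].
  destruct (le_lt_dec i (c h)) as [Hih|Hih].
  - destruct (IH i) as [l [Hl Hil]]; [lia|]. exists l. split; [lia|auto].
  - exists (S h). replace (S h - 1)%nat with h by lia. lia.
Qed.

Lemma Nondecr_replace_oc n th p q w : Nondecr n th ->
  ((1 <= p)%nat -> th p <= w) -> ((q < n)%nat -> w <= th (S q)) ->
  Nondecr n (replace_oc th p q w).
Proof.
  intros Hth Hp Hq i j Hij Hjn.
  destruct (replace_oc_cases th p q w i) as [[Hi ->]|[Hi ->]],
           (replace_oc_cases th p q w j) as [[Hj ->]|[Hj ->]].
  - lra.
  - assert (th (S q) <= th j) by (apply Hth; lia). specialize (Hq ltac:(lia)). lra.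
  - assert (th i <= th p) by (apply Hth; lia). specialize (Hp ltac:(lia)). lra.
  - apply Hth; lia.
Qed.

Lemma replace_oc_jump th p q w i :
  replace_oc th p q w i <> replace_oc th p q w (S i) ->
  i = p \/ i = q \/ ((i < p \/ q < i)%nat /\ th i <> th (S i)).
Proof.
  intros Hjump.
  destruct (replace_oc_cases th p q w i) as [[Hi Ei]|[Hi Ei]],
           (replace_oc_cases th p q w (S i)) as [[Hj Ej]|[Hj Ej]];
    rewrite Ei, Ej in Hjump; try lia.
  - congruence.
  - destruct (Nat.eq_dec i p); [lia|]. right. right. split; [lia|auto].
Qed.

Lemma const_of_no_jump (th : nat -> R) p q : (forall i, (p < i < q)%nat -> th i = th (S i)) ->
  forall i, (p < i <= q)%nat -> th i = th q.
Proof.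
  intros Hth i Hi. remember (q - i)%nat as d eqn:Hd. revert i Hi Hd.
  induction d as [|d IH]; intros i Hi Hd.
  - replace i with q by lia. reflexivity.
  - rewrite Hth, (IH (S i)) by lia. reflexivity.
Qed.

Definition Breakpoints (n k : nat) (c : nat -> nat) (th : nat -> R) : Prop :=
  c 0%nat = 0%nat /\ c k = n /\ (forall l, (l < k)%nat -> (c l <= c (S l))%nat) /\
  (forall i, (1 <= i < n)%nat -> th i <> th (S i) -> exists l, (l <= k)%nat /\ c l = i).

Lemma InThetaUp_Nondecr n k th : InThetaUp n k th -> Nondecr n th.
Proof.
  intros [c [mu [H0 [Hk [Hc [Hmu Hth]]]]]] i j Hij Hjn.
  destruct (block_of_breaks c H0 k i) as [li [Hli Hi]]; [lia|].
  destruct (block_of_breaks c H0 k j) as [lj [Hlj Hj]]; [lia|].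
  rewrite (Hth li i), (Hth lj j) by lia.
  assert (li <= lj)%nat.
  { destruct (le_lt_dec li lj); auto.
    assert (c lj <= c (li - 1))%nat by (apply (le_of_steps c k); auto; lia). lia. }
  apply (Nondecr_of_steps k mu); auto; lia.
Qed.

Lemma InThetaUp_Breakpoints n k th : InThetaUp n k th -> exists c, Breakpoints n k c th.
Proof.
  intros [c [mu [H0 [Hk [Hc [Hmu Hth]]]]]].
  exists c. repeat split; auto. intros i Hi Hjump.
  destruct (block_of_breaks c H0 k i) as [l [Hl Hil]]; [lia|].
  exists l. split; [lia|].
  destruct (Nat.eq_dec (c l) i) as [|Hne]; auto.
  exfalso. apply Hjump. rewrite (Hth l i), (Hth l (S i)) by lia. reflexivity.
Qed.

Lemma InThetaUp_of_Breakpoints n k c th : Nondecr n th -> Breakpoints n k c th ->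
  InThetaUp n k th.
Proof.
  intros Hth [H0 [Hk [Hc Hjumps]]].
  assert (Hcle := le_of_steps c k Hc).
  exists c, (fun l => th (Nat.max 1 (c l))).
  split; [auto|]. split; [auto|]. split; [auto|]. split.
  - intros l Hl. destruct (Nat.eq_dec (c (S l)) 0) as [Hz|Hz].
    + assert (Hz' : c l = 0%nat) by (specialize (Hc l ltac:(lia)); lia).
      rewrite Hz, Hz'. lra.
    + specialize (Hc l ltac:(lia)). specialize (Hcle (S l) k ltac:(lia)).
      apply Hth; lia.
  - intros l i Hl Hi. rewrite Nat.max_r by lia.
    apply (const_of_no_jump th (c (l - 1)%nat)); [|lia].
    intros i' Hi'. destruct (Req_dec (th i') (th (S i'))) as [|Hne]; auto. exfalso.
    assert (c l <= n)%nat by (rewrite <- Hk; apply Hcle; lia).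
    destruct (Hjumps i' ltac:(lia) Hne) as [l' [Hl' Hcl']].
    destruct (le_lt_dec l' (l - 1)).
    + assert (c l' <= c (l - 1))%nat by (apply Hcle; lia). lia.
    + assert (c l <= c l')%nat by (apply Hcle; lia). lia.
Qed.

Lemma Breakpoints_replace_oc n k c th p q w : Breakpoints n k c th ->
  (exists l, (l <= k)%nat /\ c l = p) -> (exists l, (l <= k)%nat /\ c l = q) ->
  Breakpoints n k c (replace_oc th p q w).
Proof.
  intros [H0 [Hk [Hc Hjumps]]] Hp Hq. repeat split; auto.
  intros i Hi Hjump. destruct (replace_oc_jump th p q w i Hjump) as [->|[->|[_ Hj]]]; auto.
Qed.

Lemma Breakpoints_move n k c th th' l0 x : Breakpoints n k c th ->
  (l0 <= k)%nat -> (0 < c l0 < n)%nat -> (x <= n)%nat ->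
  (forall i, (1 <= i < n)%nat -> th' i <> th' (S i) ->
     i = x \/ (th i <> th (S i) /\ ~ (x < i <= c l0)%nat /\ ~ (c l0 <= i < x)%nat)) ->
  Breakpoints n k
    (fun l => if (l <? l0)%nat then Nat.min (c l) x
              else if (l =? l0)%nat then x else Nat.max (c l) x) th'.
Proof.
  intros [H0 [Hk [Hc Hjumps]]] Hl0 Hcl0 Hx Hjumps'.
  assert (Hcle := le_of_steps c k Hc).
  assert (0 < l0 < k)%nat.
  { split; destruct (Nat.eq_dec l0 0), (Nat.eq_dec l0 k); subst; lia. }
  split; [|split; [|split]].
  - destruct (Nat.ltb_spec 0 l0); [rewrite H0|]; lia.
  - destruct (Nat.ltb_spec k l0), (Nat.eqb_spec k l0); lia.
  - intros l Hl. specialize (Hc l Hl).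
    destruct (Nat.ltb_spec l l0), (Nat.eqb_spec l l0),
             (Nat.ltb_spec (S l) l0), (Nat.eqb_spec (S l) l0); lia.
  - intros i Hi Hjump. destruct (Hjumps' i Hi Hjump) as [->|[Hj [Hlo Hhi]]].
    + exists l0. split; [lia|]. rewrite Nat.ltb_irrefl, Nat.eqb_refl. reflexivity.
    + destruct (Hjumps i Hi Hj) as [l [Hl <-]]. exists l. split; [lia|].
      destruct (Nat.ltb_spec l l0), (Nat.eqb_spec l l0).
      * lia.
      * assert (c l <= c l0)%nat by (apply Hcle; lia). lia.
      * subst. lia.
      * assert (c l0 <= c l)%nat by (apply Hcle; lia). lia.
Qed.

Section MaximalBlocks.
Context {n : nat} {th : nat -> R} {m : nat} {a : nat -> nat} (blocks : MaxBlocks n th m a).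

Lemma MaxBlocks_lt x y : (x < y <= m)%nat -> (a x < a y)%nat.
Proof. destruct blocks as [_ [_ [Ha _]]]. now apply lt_of_steps. Qed.

Lemma MaxBlocks_le_n l : (l <= m)%nat -> (a l <= n)%nat.
Proof.
  intros Hl. destruct blocks as [_ [Hm _]].
  destruct (Nat.eq_dec l m); [subst; lia|]. rewrite <- Hm. apply Nat.lt_le_incl, MaxBlocks_lt. lia.
Qed.

Lemma MaxBlocks_lt_iff x y : (x <= m)%nat -> (y <= m)%nat -> (a x < a y)%nat <-> (x < y)%nat.
Proof.
  intros Hx Hy. split; intros Hxy; [|apply MaxBlocks_lt; lia].
  destruct (le_lt_dec y x) as [Hyx|]; auto.
  destruct (Nat.eq_dec x y); [subst; lia|]. pose proof (MaxBlocks_lt y x). lia.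
Qed.

Lemma MaxBlocks_pos l : (l <= m)%nat -> (0 < a l)%nat <-> (0 < l)%nat.
Proof.
  intros Hl. destruct blocks as [H0 _]. rewrite <- H0 at 1. apply MaxBlocks_lt_iff; lia.
Qed.

Lemma MaxBlocks_lt_n l : (l <= m)%nat -> (a l < n)%nat <-> (l < m)%nat.
Proof.
  intros Hl. destruct blocks as [_ [Hm _]]. rewrite <- Hm at 1. apply MaxBlocks_lt_iff; lia.
Qed.

Lemma MaxBlocks_const l i : (1 <= l <= m)%nat -> (a (l - 1) < i <= a l)%nat -> th i = th (a l).
Proof.
  intros Hl Hi. destruct blocks as [_ [_ [_ [Hc _]]]]. apply (Hc l); auto.
  pose proof (MaxBlocks_lt (l - 1) l). lia.
Qed.

Lemma MaxBlocks_block_of i : (1 <= i <= n)%nat ->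
  exists l, (1 <= l <= m)%nat /\ (a (l - 1) < i <= a l)%nat.
Proof.
  intros Hi. destruct blocks as [H0 [Hm _]]. apply block_of_breaks; auto. lia.
Qed.

Lemma MaxBlocks_jump i : (1 <= i < n)%nat -> th i <> th (S i) ->
  exists l, (1 <= l < m)%nat /\ a l = i.
Proof.
  intros Hi Hjump. destruct blocks as [H0 [Hm _]].
  destruct (MaxBlocks_block_of i) as [l [Hl Hil]]; [lia|].
  exists l. destruct (Nat.eq_dec (a l) i) as [Hal|Hne].
  - split; [|auto]. destruct (Nat.eq_dec l m); [subst; lia|lia].
  - exfalso. apply Hjump. rewrite (MaxBlocks_const l i), (MaxBlocks_const l (S i)); auto; lia.
Qed.

Lemma MaxBlocks_cut {k : nat} {c : nat -> nat} l : Breakpoints n k c th -> (l <= m)%nat ->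
  exists l', (l' <= k)%nat /\ c l' = a l.
Proof.
  intros [Hc0 [Hck [_ Hjumps]]] Hl. destruct blocks as [H0 [Hm [_ [_ Hjump]]]].
  destruct (Nat.eq_dec l 0) as [->|]; [exists 0%nat; split; [lia|congruence]|].
  destruct (Nat.eq_dec l m) as [->|]; [exists k; split; [lia|congruence]|].
  apply Hjumps; [|apply Hjump; lia].
  pose proof (MaxBlocks_lt 0 l). pose proof (MaxBlocks_lt l m). lia.
Qed.

Lemma MaxBlocks_succ l : (l < m)%nat -> th (S (a l)) = th (a (S l)).
Proof.
  intros Hl. apply MaxBlocks_const; [lia|].
  replace (S l - 1)%nat with l by lia. pose proof (MaxBlocks_lt l (S l)). lia.
Qed.

Context (nondecr : Nondecr n th).

Lemma MaxBlocks_jump_up l : (1 <= l < m)%nat -> th (a l) < th (S (a l)).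
Proof.
  intros Hl. destruct blocks as [_ [Hm [_ [_ Hjump]]]].
  pose proof (MaxBlocks_lt 0 l). pose proof (MaxBlocks_lt l m).
  assert (th (a l) <= th (S (a l))) by (apply nondecr; lia).
  specialize (Hjump l Hl). lra.
Qed.

Lemma MaxBlocks_step l : (1 <= l < m)%nat -> th (a l) < th (a (S l)).
Proof.
  intros Hl. rewrite <- MaxBlocks_succ by lia. now apply MaxBlocks_jump_up.
Qed.

End MaximalBlocks.

Section PiecewiseFit.
Variables (n k : nat) (X thk : nat -> R) (m : nat) (a : nat -> nat).
Hypotheses (thk_in : InThetaUp n k thk)
  (thk_opt : forall th, InThetaUp n k th -> sqdist n X thk <= sqdist n X th)
  (blocks : MaxBlocks n thk m a).

Let nondecr := InThetaUp_Nondecr n k thk thk_in.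

Lemma block_sum j : (1 <= j <= m)%nat ->
  sum_oc X (a (j - 1)%nat) (a j) = INR (a j - a (j - 1)) * thk (a j).
Proof.
  intros Hj. destruct (InThetaUp_Breakpoints n k thk thk_in) as [c Hc].
  set (p := a (j - 1)%nat). set (q := a j). set (v := thk q).
  assert (Hpq : (p < q <= n)%nat).
  { pose proof (MaxBlocks_lt blocks (j - 1) j). pose proof (MaxBlocks_le_n blocks j). lia. }
  destruct (exists_margin (2 <= j)%nat (thk p) v) as [d1 [Hd1 Hlow]].
  { intros. unfold p, v, q. replace j with (S (j - 1)) at 2 by lia.
    apply (MaxBlocks_step blocks nondecr). lia. }
  destruct (exists_margin (j < m)%nat v (thk (a (S j)))) as [d2 [Hd2 Hup]].
  { intros. now apply (MaxBlocks_step blocks nondecr). }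
  pose proof (Rmin_l d1 d2). pose proof (Rmin_r d1 d2). set (d := Rmin d1 d2) in *.
  assert (Hd : 0 < d) by now apply Rmin_glb_lt.
  assert (Hin : forall e, - d <= e <= d ->
            sqdist n X thk <= sqdist n X (replace_oc thk p q (v + e))).
  { intros e He. apply thk_opt, (InThetaUp_of_Breakpoints n k c).
    - apply Nondecr_replace_oc; auto.
      + intros Hp. apply (MaxBlocks_pos blocks (j - 1)) in Hp; [|lia].
        specialize (Hlow ltac:(lia)). lra.
      + intros Hq. apply (MaxBlocks_lt_n blocks j) in Hq; [|lia].
        unfold q. rewrite (MaxBlocks_succ blocks) by lia. specialize (Hup Hq). lra.
    - apply Breakpoints_replace_oc; auto; apply (MaxBlocks_cut blocks); auto; lia. }
  assert (Hv : forall i, (p < i <= q)%nat -> thk i = v).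
  { intros i Hi. now apply (MaxBlocks_const blocks j). }
  apply Rle_antisym.
  - apply (sum_oc_le_of_raise n X thk p q v d); auto; [lia|].
    intros e He. apply Hin. lra.
  - apply (sum_oc_ge_of_lower n X thk p q v d); auto; [lia|].
    intros e He. replace (v - e) with (v + - e) by ring. apply Hin. lra.
Qed.

Lemma block_sum_succ j : (j < m)%nat ->
  sum_oc X (a j) (a (S j)) = INR (a (S j) - a j) * thk (a (S j)).
Proof.
  intros Hj. pose proof (block_sum (S j) ltac:(lia)) as Hsum.
  now replace (S j - 1)%nat with j in Hsum by lia.
Qed.

Lemma sum_lt_mid_adjacent j s : (1 <= j < m)%nat -> (a (j - 1) <= s < a j)%nat ->
  sum_oc X s (a j) < INR (a j - s) * ((thk (a j) + thk (a (S j))) / 2).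
Proof.
  intros Hj Hs. set (u1 := thk (a j)). set (u2 := thk (a (S j))).
  assert (Hu : u1 < u2) by (apply (MaxBlocks_step blocks nondecr); lia).
  pose proof (MaxBlocks_lt blocks j (S j)). pose proof (MaxBlocks_le_n blocks (S j)).
  destruct (Rlt_or_le (sum_oc X s (a j)) (INR (a j - s) * ((u1 + u2) / 2))) as [|Hge]; auto.
  exfalso.
  destruct (merge_gain_lower u1 u2 (sum_oc X s (a j)) (INR (a j - s)) (INR (a (S j) - a j)))
    as [w [Hw Hgain]]; try (apply lt_0_INR; lia); try lra.
  destruct (InThetaUp_Breakpoints n k thk thk_in) as [c Hc].
  destruct (MaxBlocks_cut blocks j Hc) as [l0 [Hl0 Hcl0]]; [lia|].
  assert (Hin : InThetaUp n k (replace_oc thk s (a (S j)) w)).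
  { eapply InThetaUp_of_Breakpoints.
    - apply Nondecr_replace_oc; auto.
      + intros. assert (thk s <= u1) by (apply nondecr; lia). lra.
      + intros. assert (u2 <= thk (S (a (S j)))) by (apply nondecr; lia). lra.
    - apply (Breakpoints_move n k c thk _ l0 s); auto; try lia.
      intros i Hi Hjump.
      destruct (replace_oc_jump _ _ _ _ _ Hjump) as [->|[->|[Hout Hij]]]; [now left|right|right].
      + assert (S j < m)%nat by (apply (MaxBlocks_lt_n blocks (S j)); lia).
        split; [|lia]. apply Rlt_not_eq, (MaxBlocks_jump_up blocks nondecr). lia.
      + split; [auto|lia]. }
  apply thk_opt in Hin.
  enough (sqdist n X (replace_oc thk s (a (S j)) w) - sqdist n X thk < 0) by lra.
  rewrite (sqdist_replace_two_blocks n X thk s (a j) (a (S j)) u1 u2 w); try lia.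
  - rewrite (block_sum_succ j) by lia. exact Hgain.
  - intros i Hi. apply (MaxBlocks_const blocks j); lia.
  - intros i Hi. apply (MaxBlocks_const blocks (S j)); [lia|]. replace (S j - 1)%nat with j; lia.
Qed.

Lemma mid_lt_sum_adjacent j t : (1 <= j < m)%nat -> (a j < t <= a (S j))%nat ->
  INR (t - a j) * ((thk (a j) + thk (a (S j))) / 2) < sum_oc X (a j) t.
Proof.
  intros Hj Ht. set (u1 := thk (a j)). set (u2 := thk (a (S j))).
  assert (Hu : u1 < u2) by (apply (MaxBlocks_step blocks nondecr); lia).
  pose proof (MaxBlocks_lt blocks (j - 1) j). pose proof (MaxBlocks_le_n blocks (S j)).
  destruct (Rlt_or_le (INR (t - a j) * ((u1 + u2) / 2)) (sum_oc X (a j) t)) as [|Hle]; auto.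
  exfalso.
  destruct (merge_gain_upper u1 u2 (sum_oc X (a j) t) (INR (a j - a (j - 1))) (INR (t - a j)))
    as [w [Hw Hgain]]; try (apply lt_0_INR; lia); try lra.
  destruct (InThetaUp_Breakpoints n k thk thk_in) as [c Hc].
  destruct (MaxBlocks_cut blocks j Hc) as [l0 [Hl0 Hcl0]]; [lia|].
  assert (Hin : InThetaUp n k (replace_oc thk (a (j - 1)%nat) t w)).
  { eapply InThetaUp_of_Breakpoints.
    - apply Nondecr_replace_oc; auto.
      + intros. assert (thk (a (j - 1)%nat) <= u1) by (apply nondecr; lia). lra.
      + intros. assert (u2 <= thk (S t)).
        { unfold u2. rewrite <- (MaxBlocks_succ blocks) by lia. apply nondecr; lia. }
        lra.
    - apply (Breakpoints_move n k c thk _ l0 t); auto; try lia.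
      intros i Hi Hjump.
      destruct (replace_oc_jump _ _ _ _ _ Hjump) as [->|[->|[Hout Hij]]]; [right|now left|right].
      + assert (0 < j - 1)%nat by (apply (MaxBlocks_pos blocks (j - 1)); lia).
        split; [|lia]. apply Rlt_not_eq, (MaxBlocks_jump_up blocks nondecr). lia.
      + split; [auto|lia]. }
  apply thk_opt in Hin.
  enough (sqdist n X (replace_oc thk (a (j - 1)%nat) t w) - sqdist n X thk < 0) by lra.
  rewrite (sqdist_replace_two_blocks n X thk (a (j - 1)%nat) (a j) t u1 u2 w); try lia.
  - rewrite (block_sum j) by lia. exact Hgain.
  - intros i Hi. apply (MaxBlocks_const blocks j); lia.
  - intros i Hi. apply (MaxBlocks_const blocks (S j)); [lia|]. replace (S j - 1)%nat with j; lia.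
Qed.

Lemma sum_lt_mid j s : (1 <= j < m)%nat -> (s < a j)%nat ->
  sum_oc X s (a j) < INR (a j - s) * ((thk (a j) + thk (a (S j))) / 2).
Proof.
  revert s. induction j as [|j IH]; intros s Hj Hs; [lia|].
  destruct (le_lt_dec (a j) s) as [Hjs|Hsj].
  - apply sum_lt_mid_adjacent; [lia|]. replace (S j - 1)%nat with j by lia. lia.
  - assert (0 < j)%nat by (apply (MaxBlocks_pos blocks j); lia).
    pose proof (MaxBlocks_lt blocks j (S j)).
    specialize (IH s ltac:(lia) Hsj).
    rewrite (sum_oc_split X s (a j) (a (S j))), block_sum_succ by lia.
    replace (INR (a (S j) - s)) with (INR (a (S j) - a j) + INR (a j - s))
      by (rewrite <- plus_INR; f_equal; lia).
    pose proof (MaxBlocks_step blocks nondecr j ltac:(lia)).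
    pose proof (MaxBlocks_step blocks nondecr (S j) ltac:(lia)).
    assert (0 < INR (a (S j) - a j)) by (apply lt_0_INR; lia).
    assert (0 < INR (a j - s)) by (apply lt_0_INR; lia).
    nra.
Qed.

Lemma mid_lt_sum j t : (1 <= j < m)%nat -> (a j < t <= n)%nat ->
  INR (t - a j) * ((thk (a j) + thk (a (S j))) / 2) < sum_oc X (a j) t.
Proof.
  revert t. remember (m - j)%nat as d eqn:Hd. revert j Hd.
  induction d as [|d IH]; intros j Hd t Hj Ht; [lia|].
  destruct (le_lt_dec t (a (S j))) as [Hts|Hst].
  - apply mid_lt_sum_adjacent; lia.
  - assert (S j < m)%nat by (apply (MaxBlocks_lt_n blocks (S j)); lia).
    pose proof (MaxBlocks_lt blocks j (S j)).
    specialize (IH (S j) ltac:(lia) t ltac:(lia) ltac:(lia)).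
    rewrite (sum_oc_split X (a j) (a (S j)) t), block_sum_succ by lia.
    replace (INR (t - a j)) with (INR (a (S j) - a j) + INR (t - a (S j)))
      by (rewrite <- plus_INR; f_equal; lia).
    pose proof (MaxBlocks_step blocks nondecr j ltac:(lia)).
    pose proof (MaxBlocks_step blocks nondecr (S j) ltac:(lia)).
    assert (0 < INR (a (S j) - a j)) by (apply lt_0_INR; lia).
    assert (0 < INR (t - a (S j))) by (apply lt_0_INR; lia).
    nra.
Qed.

Lemma block_value_mean j i : (1 <= j <= m)%nat -> (a (j - 1) < i <= a j)%nat ->
  thk i = mean_oc X (a (j - 1)%nat) (a j).
Proof.
  intros Hj Hi. pose proof (MaxBlocks_lt blocks (j - 1) j).
  assert (0 < INR (a j - a (j - 1))) by (apply lt_0_INR; lia).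
  rewrite (MaxBlocks_const blocks j i) by lia.
  unfold mean_oc. rewrite block_sum by lia. field. lra.
Qed.

Lemma mean_lt_mid j s : (1 <= j < m)%nat -> (s < a j)%nat ->
  mean_oc X s (a j) < (thk (a j) + thk (a (S j))) / 2.
Proof.
  intros Hj Hs. pose proof (sum_lt_mid j s Hj Hs) as Hsum.
  rewrite sum_oc_mean in Hsum by lia.
  apply Rmult_lt_reg_l in Hsum; auto. apply lt_0_INR. lia.
Qed.

Lemma mid_lt_mean j t : (1 <= j < m)%nat -> (a j < t <= n)%nat ->
  (thk (a j) + thk (a (S j))) / 2 < mean_oc X (a j) t.
Proof.
  intros Hj Ht. pose proof (mid_lt_sum j t Hj Ht) as Hsum.
  rewrite sum_oc_mean in Hsum by lia.
  apply Rmult_lt_reg_l in Hsum; auto. apply lt_0_INR. lia.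
Qed.

End PiecewiseFit.

Section Isotonic.
Variables (n : nat) (X th : nat -> R) (m : nat) (b : nat -> nat).
Hypotheses (nondecr : Nondecr n th)
  (th_opt : forall th', Nondecr n th' -> sqdist n X th <= sqdist n X th')
  (blocks : MaxBlocks n th m b).

Lemma isotonic_lt_of_means_lt r c : (1 <= r <= n)%nat ->
  (forall s, (s < r)%nat -> mean_oc X s r < c) -> th r < c.
Proof.
  intros Hr Hmeans.
  destruct (MaxBlocks_block_of blocks r Hr) as [l [Hl Hrl]].
  set (p := b (l - 1)%nat).
  destruct (exists_margin (1 <= p)%nat (th p) (th r)) as [d [Hd Hlow]].
  { intros Hp. apply (MaxBlocks_pos blocks (l - 1)) in Hp; [|lia].
    rewrite (MaxBlocks_const blocks l r) by lia. unfold p. replace l with (S (l - 1)) at 2 by lia.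
    apply (MaxBlocks_step blocks nondecr). lia. }
  assert (Hsum : INR (r - p) * th r <= sum_oc X p r).
  { apply (sum_oc_ge_of_lower n X th p r (th r) d); auto; [lia| |].
    - intros i Hi. rewrite (MaxBlocks_const blocks l i), (MaxBlocks_const blocks l r) by lia.
      reflexivity.
    - intros e He. apply th_opt, Nondecr_replace_oc; auto.
      + intros Hp. specialize (Hlow Hp). lra.
      + intros. assert (th r <= th (S r)) by (apply nondecr; lia). lra. }
  specialize (Hmeans p ltac:(lia)). rewrite (sum_oc_mean X p r) in Hsum by lia.
  assert (0 < INR (r - p)) by (apply lt_0_INR; lia).
  nra.
Qed.

Lemma isotonic_gt_of_means_gt r c : (r < n)%nat ->
  (forall t, (r < t <= n)%nat -> c < mean_oc X r t) -> c < th (S r).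
Proof.
  intros Hr Hmeans.
  destruct (MaxBlocks_block_of blocks (S r)) as [l [Hl Hrl]]; [lia|].
  set (q := b l).
  destruct (exists_margin (q < n)%nat (th (S r)) (th (S q))) as [d [Hd Hup]].
  { intros Hq. apply (MaxBlocks_lt_n blocks l) in Hq; [|lia].
    rewrite (MaxBlocks_const blocks l (S r)) by lia. now apply (MaxBlocks_jump_up blocks nondecr). }
  assert (Hsum : sum_oc X r q <= INR (q - r) * th (S r)).
  { apply (sum_oc_le_of_raise n X th r q (th (S r)) d); auto.
    - pose proof (MaxBlocks_le_n blocks l). lia.
    - intros i Hi. rewrite (MaxBlocks_const blocks l i), (MaxBlocks_const blocks l (S r)) by lia.
      reflexivity.
    - intros e He. apply th_opt, Nondecr_replace_oc; auto.
      + intros. assert (th r <= th (S r)) by (apply nondecr; lia). lra.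
      + intros Hq. specialize (Hup Hq). lra. }
  pose proof (MaxBlocks_le_n blocks l).
  specialize (Hmeans q ltac:(lia)). rewrite (sum_oc_mean X r q) in Hsum by lia.
  assert (0 < INR (q - r)) by (apply lt_0_INR; lia).
  nra.
Qed.

End Isotonic.

Theorem mainTheorem12 (n k : nat) (X thk thn : nat -> R)
  (m : nat) (a : nat -> nat) (mn : nat) (b : nat -> nat) :
  (1 <= k <= n)%nat ->
  InThetaUp n k thk ->
  (forall th, InThetaUp n k th -> sqdist n X thk <= sqdist n X th) ->
  Nondecr n thn ->
  (forall th, Nondecr n th -> sqdist n X thn <= sqdist n X th) ->
  MaxBlocks n thk m a ->
  MaxBlocks n thn mn b ->
  (forall j i, (1 <= j <= m)%nat -> (a (j - 1) < i <= a j)%nat ->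
      thk i = mean_oc X (a (j - 1)%nat) (a j)) /\
  (forall j, (1 <= j <= m - 1)%nat ->
      (forall s t, (s < a j)%nat -> (a j < t)%nat -> (t <= n)%nat ->
         mean_oc X s (a j) < (thk (a j) + thk (a (S j))) / 2 /\
         (thk (a j) + thk (a (S j))) / 2 < mean_oc X (a j) t) /\
      thn (a j) < (thk (a j) + thk (a (S j))) / 2 /\
      (thk (a j) + thk (a (S j))) / 2 < thn (S (a j))) /\
  (forall j, (1 <= j <= m)%nat -> exists j', (1 <= j' <= mn)%nat /\ b j' = a j).
Proof.
  intros Hkn Hin Hopt Hndn Hoptn Hblk Hbln.
  assert (Hsplit : forall j, (1 <= j <= m - 1)%nat ->
      thn (a j) < (thk (a j) + thk (a (S j))) / 2 < thn (S (a j))).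
  { intros j Hj.
    assert (0 < a j < n)%nat.
    { split; [apply (MaxBlocks_pos Hblk j) | apply (MaxBlocks_lt_n Hblk j)]; lia. }
    split.
    - apply (isotonic_lt_of_means_lt n X thn mn b Hndn Hoptn Hbln); [lia|].
      intros s Hs. apply (mean_lt_mid n k X thk m a Hin Hopt Hblk); lia.
    - apply (isotonic_gt_of_means_gt n X thn mn b Hndn Hoptn Hbln); [lia|].
      intros t Ht. apply (mid_lt_mean n k X thk m a Hin Hopt Hblk); lia. }
  split; [|split].
  - exact (block_value_mean n k X thk m a Hin Hopt Hblk).
  - intros j Hj. split; [|apply Hsplit; auto].
    intros s t Hs Ht Htn. split.
    + apply (mean_lt_mid n k X thk m a Hin Hopt Hblk); lia.
    + apply (mid_lt_mean n k X thk m a Hin Hopt Hblk); lia.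
  - intros j Hj. destruct (Nat.eq_dec j m) as [->|Hjm].
    + exists mn. destruct Hblk as [_ [-> _]], Hbln as [Hb0 [Hbm _]]. split; auto.
      destruct mn; [rewrite Hb0 in Hbm|]; lia.
    + assert (0 < a j < n)%nat.
      { split; [apply (MaxBlocks_pos Hblk j) | apply (MaxBlocks_lt_n Hblk j)]; lia. }
      destruct (MaxBlocks_jump Hbln (a j)) as [l [Hl Hbl]]; [lia| |].
      * pose proof (Hsplit j ltac:(lia)). lra.
      * exists l. split; [lia|auto].
Qed.
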